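(* Let $G$ be a finite digraph without sources, and suppose its vertices can be ordered as $v_1,\dots,v_n$ so that for all $i<j$, if $v_jv_i\in E(G)$ then also $v_iv_j\in E(G)$. Then $G$ has a quasi-kernel with at most $n/2$ vertices.
   Context: Digraphs are finite, without loops and without multiple edges in the same direction; anti-parallel edges are allowed. An edge $uv$ goes from $u$ to $v$. For $V'\subseteq V(G)$, $\Gamma^+(V')$ is the set of out-neighbours of vertices of $V'$, $\Gamma^+_1(V')=V'\cup\Gamma^+(V')$ and $\Gamma^+_2(V')=V'\cup\Gamma^+(V')\cup\Gamma^+(\Gamma^+(V'))$. A source is a vertex of in-degree $0$. A quasi-kernel of $G$ is an independent set $Q\subseteq V(G)$ with $\Gamma^+_2(Q)=V(G)$. *)

From mathcomp Require Import all_boot.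
Set Implicit Arguments. Unset Strict Implicit. Unset Printing Implicit Defensive.

(* A finite digraph on vertex set T: edge relation e (e u v means uv is an edge,
   from u to v). Multiple edges are impossible since
   e is a relation; anti-parallel edges are allowed. *)
Definition loopless (T : finType) (e : rel T) : Prop := forall v, ~~ e v v.

Definition outN (T : finType) (e : rel T) (A : {set T}) : {set T} :=
  [set v | [exists u in A, e u v]].

Definition Gamma1 (T : finType) (e : rel T) (A : {set T}) : {set T} :=
  A :|: outN e A.

Definition Gamma2 (T : finType) (e : rel T) (A : {set T}) : {set T} :=
  A :|: outN e A :|: outN e (outN e A).

Definition independent (T : finType) (e : rel T) (A : {set T}) : Prop :=
  forall u v, u \in A -> v \in A -> ~~ e u v.

Definition quasi_kernel (T : finType) (e : rel T) (Q : {set T}) : Prop :=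
  independent e Q /\ Gamma2 e Q = [set: T].

Definition is_source (T : finType) (e : rel T) (v : T) : Prop :=
  forall u, ~~ e u v.

From mathcomp Require Import all_boot.

Set Implicit Arguments.
Unset Strict Implicit.
Unset Printing Implicit Defensive.

(* Rank the vertices by the given order (an injective map into
   nat) so that every edge from a higher-ranked to a lower-ranked vertex is
   reversed.  In such a digraph every vertex set S contains an independent set
   M that absorbs S in one step (S is contained in Gamma1 M): take the
   minimum-rank vertex m of S, discard its neighbours in both directions, and
   recurse; a discarded in-neighbour w of m has higher rank, so m -> w is an
   edge as well.
   Applying this to the whole vertex set gives a kernel Q1, and applying it to
   the complement of Q1 gives an independent set Q2 disjoint from Q1 with
   ~: Q1 inside Gamma1 Q2.  Because there are no sources, each vertex of Q1
   has an in-neighbour, necessarily outside Q1, so Q2 reaches all of Q1 in two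
   steps: Q2 is a quasi-kernel too.  Since Q1 and Q2 are disjoint, the
   smaller of the two has at most n/2 vertices. *)

Section Reachability.
Variables (T : finType) (e : rel T).

Lemma mem_outN (A : {set T}) (u v : T) : u \in A -> e u v -> v \in outN e A.
Proof. by move=> uA euv; rewrite inE; apply/existsP; exists u; rewrite uA. Qed.

Lemma Gamma1S (A B : {set T}) : A \subset B -> Gamma1 e A \subset Gamma1 e B.
Proof.
move=> AB; apply: setUSS => //; apply/subsetP => v; rewrite !inE.
by case/existsP=> u /andP[uA euv]; apply/existsP; exists u; rewrite (subsetP AB).
Qed.

Lemma Gamma1_sub_Gamma2 (A : {set T}) : Gamma1 e A \subset Gamma2 e A.
Proof. by apply/subsetP => v; rewrite !inE => /orP[] ->; rewrite ?orbT. Qed.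

Lemma kernel_quasi_kernel (Q : {set T}) :
  independent e Q -> Gamma1 e Q = [set: T] -> quasi_kernel e Q.
Proof.
move=> indQ absQ; split=> //; apply/eqP; rewrite eqEsubset subsetT /=.
by rewrite -absQ Gamma1_sub_Gamma2.
Qed.

End Reachability.

Section OrderedDigraph.
Variables (T : finType) (e : rel T) (rank : T -> nat).
Hypothesis loopless_e : loopless e.
Hypothesis rank_inj : injective rank.
Hypothesis down_edges_reversed : forall u v, rank u < rank v -> e v u -> e u v.

Lemma absorbing_independent_subset (S : {set T}) :
  exists M : {set T},
    [/\ M \subset S, independent e M & S \subset Gamma1 e M].
Proof.
elim: {S}_.+1 {-2}S (ltnSn #|S|) => // k IH S cardS.
have [S0|[x0 x0S]] := set_0Vmem S.
  by exists set0; split; rewrite ?S0 ?sub0set // => u v; rewrite inE.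
have [m mS m_min] := arg_minnP rank x0S.
pose S' := [set w in S | [&& w != m, ~~ e m w & ~~ e w m]].
have subS' : S' \subset S by apply/subsetP => w; rewrite inE => /andP[].
have ltS' : S' \proper S.
  by apply/properP; split=> //; exists m; rewrite // inE eqxx andbF.
have [M [MS' indM absM]] : exists M : {set T},
    [/\ M \subset S', independent e M & S' \subset Gamma1 e M].
  by apply: IH; apply: leq_trans (proper_card ltS') _; rewrite -ltnS.
have MS := subset_trans MS' subS'.
have S'_far w : w \in S' -> ~~ e m w && ~~ e w m.
  by rewrite inE => /and3P[_ _].
have S_minus_S' w : w \in S -> w \notin S' -> w = m \/ e m w.
  move=> wS; rewrite inE wS /=.
  have [-> | wm] /= := eqVneq w m; first by left.
  rewrite negb_and !negbK => /orP[emw | ewm]; right=> //.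
  apply: down_edges_reversed ewm; rewrite ltn_neqAle m_min // andbT.
  by apply: contra_neq wm => /rank_inj.
exists (m |: M); split.
- by rewrite subUset sub1set MS andbT.
- move=> u v; rewrite !inE => /predU1P[-> | uM] /predU1P[-> | vM].
  + exact: loopless_e.
  + by case/andP: (S'_far v (subsetP MS' v vM)).
  + by case/andP: (S'_far u (subsetP MS' u uM)).
  + exact: indM.
- apply/subsetP => w wS; have [wS' | wS'] := boolP (w \in S').
    by apply: (subsetP (Gamma1S e (subsetUr _ _))); exact: (subsetP absM).
  case: (S_minus_S' w wS wS') => [-> | emw]; first by rewrite !inE eqxx.
  by rewrite /Gamma1 in_setU (mem_outN (setU11 m M) emw) orbT.
Qed.

End OrderedDigraph.

Section SecondKernel.
Variables (T : finType) (e : rel T).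
Hypothesis no_source : forall v : T, ~ is_source e v.

(* If Q1 is independent and the independent set Q2 absorbs the complement of
   Q1 in one step, then Q2 is a quasi-kernel: each vertex of Q1 has an
   in-neighbour, which lies outside Q1 and is thus within one step of Q2. *)
Lemma complement_kernel_quasi_kernel (Q1 Q2 : {set T}) :
  independent e Q1 -> independent e Q2 -> ~: Q1 \subset Gamma1 e Q2 ->
  quasi_kernel e Q2.
Proof.
move=> ind1 ind2 abs2; split=> //; apply/eqP; rewrite eqEsubset subsetT /=.
apply/subsetP => w _; have [wQ1 | wQ1] := boolP (w \in Q1); last first.
  by apply: (subsetP (Gamma1_sub_Gamma2 e Q2)); apply: (subsetP abs2); rewrite inE.
have [x exw] : exists x, e x w.
  apply/existsP; apply: contraT => /existsPn no_in.
  by case: (no_source no_in).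
have xQ1 : x \in ~: Q1.
  by rewrite inE; apply: contraL exw => xQ1; exact: ind1.
move: (subsetP abs2 x xQ1); rewrite /Gamma1 /Gamma2 !in_setU => /orP[xQ2 | xN].
  by rewrite (mem_outN xQ2 exw) orbT.
by rewrite (mem_outN xN exw) !orbT.
Qed.

End SecondKernel.

Lemma disjoint_half (T : finType) (A B : {set T}) :
  B \subset ~: A -> (2 * #|A| <= #|T|)%N \/ (2 * #|B| <= #|T|)%N.
Proof.
move=> BA; have sum_le : #|A| + #|B| <= #|T|.
  by rewrite -(cardsC A) leq_add2l subset_leq_card.
have [AB | /ltnW BA'] := leqP #|A| #|B|; [left | right];
  by rewrite mul2n -addnn (leq_trans _ sum_le) // ?leq_add2l ?leq_add2r.
Qed.

Theorem mainTheorem1 (T : finType) (e : rel T) :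
  loopless e ->
  (forall v : T, ~ is_source e v) ->
  (exists f : T -> 'I_#|T|, bijective f /\
     forall u v : T, f u < f v -> e v u -> e u v) ->
  exists Q : {set T}, quasi_kernel e Q /\ (2 * #|Q| <= #|T|)%N.
Proof.
move=> loopless_e no_source [f [f_bij down_rev]].
have rank_inj : injective (fun x => nat_of_ord (f x)).
  by move=> x y /val_inj /(bij_inj f_bij).
have [Q1 [_ ind1 abs1]] :=
  absorbing_independent_subset loopless_e rank_inj down_rev [set: T].
have [Q2 [sub2 ind2 abs2]] :=
  absorbing_independent_subset loopless_e rank_inj down_rev (~: Q1).
have qk1 : quasi_kernel e Q1.
  by apply: kernel_quasi_kernel => //; apply/eqP; rewrite eqEsubset subsetT.
have qk2 := complement_kernel_quasi_kernel no_source ind1 ind2 abs2.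
by case: (disjoint_half sub2) => half; [exists Q1 | exists Q2].
Qed.
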